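(* Let $u\in W^v$ and $\mu\in Y$. For every $\nu\in R_u(\mu)$ there exist real numbers $\lambda_{u'}\in[0,1]$, $u'\in[1,u]$, with $\sum_{u'\le u}\lambda_{u'}=1$ and $\nu=\sum_{u'\le u}\lambda_{u'}\,u'(\mu)$.
   Context: $I$ finite, $A$ a generalized Cartan matrix, $Y$ a free $\mathbb Z$-module of finite rank with free family $(\alpha_i^\vee)_{i\in I}$ and $\alpha_i\in\mathrm{Hom}(Y,\mathbb Z)$ with $\alpha_j(\alpha_i^\vee)=a_{i,j}$; $\mathbb A=Y\otimes\mathbb R$; $r_i(v)=v-\alpha_i(v)\alpha_i^\vee$; $W^v=\langle r_i\rangle$ with Bruhat order $\le$, $[1,u]=\{w:w\le u\}$; $Q^\vee=\bigoplus\mathbb Z\alpha_i^\vee$. For $E\subset Y$, $R_i(E)=\mathrm{conv}(E\cup r_i(E))\cap(E+Q^\vee)$; for $w\in W^v$, $\lambda\in Y$, $R_w(\lambda)=\bigcup R_{i_1}(R_{i_2}(\cdots R_{i_k}(\{\lambda\})\cdots))$ over all reduced expressions $w=r_{i_1}\cdots r_{i_k}$. *)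

From HB Require Import structures.
From mathcomp Require Import all_boot all_order all_algebra.
Set Implicit Arguments. Unset Strict Implicit. Unset Printing Implicit Defensive.
Import Order.TTheory GRing.Theory Num.Theory.
Local Open Scope ring_scope.

(* Y = Z^n as row vectors 'rV[int]_n ; I = 'I_k.
   alphav i : 'rV[int]_n   are the coroots alpha_i^vee in Y,
   alpha  j : 'cV[int]_n   represent alpha_j in Hom(Y,Z), via  alpha_j(v) = (v *m alpha j) 0 0. *)

Definition is_GCM (k : nat) (A : 'M[int]_k) : Prop :=
  (forall i, A i i = 2) /\
  (forall i j, i != j -> A i j <= 0) /\
  (forall i j, A i j = 0 <-> A j i = 0).

Section Weyl.
Variables (n k : nat) (alpha : 'I_k -> 'cV[int]_n) (alphav : 'I_k -> 'rV[int]_n).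

Definition evalroot (j : 'I_k) (v : 'rV[int]_n) : int := (v *m alpha j) 0 0.

Definition free_coroots : Prop :=
  forall c : 'I_k -> int, \sum_i c i *: alphav i = 0 -> forall i, c i = 0.

Definition refl (i : 'I_k) (v : 'rV[int]_n) : 'rV[int]_n := v - evalroot i v *: alphav i.
Definition rmx (i : 'I_k) : 'M[int]_n := 1%:M - alpha i *m alphav i.

(* the element r_{i1} ... r_{im} of W^v for the word [:: i1; ...; im],
   as a matrix acting on the right: (v *m mat_word s) = r_{i1}(...(r_{im} v)) *)
Definition mat_word (s : seq 'I_k) : 'M[int]_n := foldr (fun i M => M *m rmx i) 1%:M s.

Definition in_Weyl (w : 'M[int]_n) : Prop := exists s, w = mat_word s.

Definition reduced (s : seq 'I_k) : Prop :=
  forall t, mat_word t = mat_word s -> (size s <= size t)%N.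

Definition bruhat_le (w' w : 'M[int]_n) : Prop :=
  exists s t, [/\ reduced s, mat_word s = w, subseq t s & mat_word t = w'].

Definition in_Qvee (y : 'rV[int]_n) : Prop :=
  exists c : 'I_k -> int, y = \sum_i c i *: alphav i.

Variable R : realFieldType.

Definition embed (y : 'rV[int]_n) : 'rV[R]_n := map_mx (fun z : int => z%:~R) y.

Definition in_conv (P : 'rV[int]_n -> Prop) (y : 'rV[int]_n) : Prop :=
  exists (m : nat) (pts : 'I_m -> 'rV[int]_n) (lam : 'I_m -> R),
    [/\ forall j, P (pts j), forall j, 0 <= lam j, \sum_j lam j = 1 &
        embed y = \sum_j lam j *: embed (pts j)].

Definition Ri (i : 'I_k) (E : 'rV[int]_n -> Prop) : 'rV[int]_n -> Prop :=
  fun y => in_conv (fun x => E x \/ exists z, E z /\ x = refl i z) y /\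
           exists q, E q /\ in_Qvee (y - q).

Definition Rword (s : seq 'I_k) (lam : 'rV[int]_n) : 'rV[int]_n -> Prop :=
  foldr (fun i E => Ri i E) (fun y => y = lam) s.

Definition Rw (w : 'M[int]_n) (lam : 'rV[int]_n) : 'rV[int]_n -> Prop :=
  fun y => exists s, [/\ reduced s, mat_word s = w & Rword s lam y].

End Weyl.

(* Every point of R_{i_1}(...R_{i_m}({mu})) is a convex combination of the points
   [mu * w_t], [t] a subword of [s = i_1 ... i_m]: a point of [R_i(E)] is a convex
   combination of points of [E] and of [r_i(E)], and [r_i] maps [mu * w_t] to
   [mu * w_(i :: t)].  Subwords of a reduced word of [u] represent elements of
   [[1, u]], so grouping the weights by the element represented gives the claim;
   [[1, u]] is finite since its elements have expressions no longer than [s]. *)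

From HB Require Import structures.
From mathcomp Require Import all_boot all_order all_algebra.
From mathcomp Require Import boolp.
Set Implicit Arguments. Unset Strict Implicit. Unset Printing Implicit Defensive.
Import Order.TTheory GRing.Theory Num.Theory.
Local Open Scope ring_scope.

Section SubwordCombinations.
Variables (R : realFieldType) (n k : nat) (alpha : 'I_k -> 'cV[int]_n)
  (alphav : 'I_k -> 'rV[int]_n) (mu : 'rV[int]_n).

Local Notation intr_mx M := (map_mx (fun z : int => (z%:~R : R)) M).

Definition subword_comb (s : seq 'I_k) (c : R) (x : 'rV[R]_n) : Prop :=
  exists l : seq (R * seq 'I_k),
    [/\ forall p, p \in l -> 0 <= p.1 /\ subseq p.2 s,
        \sum_(p <- l) p.1 = c &
        x = \sum_(p <- l) p.1 *: embed R (mu *m mat_word alpha alphav p.2)].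

Lemma subword_comb0 s : subword_comb s 0 0.
Proof. by exists [::]; split => //; rewrite big_nil. Qed.

Lemma subword_combD s c d x y :
  subword_comb s c x -> subword_comb s d y -> subword_comb s (c + d) (x + y).
Proof.
move=> [l1 [H1 S1 E1]] [l2 [H2 S2 E2]]; exists (l1 ++ l2); split.
- by move=> p; rewrite mem_cat => /orP [/H1|/H2].
- by rewrite big_cat S1 S2.
- by rewrite big_cat E1 E2.
Qed.

Lemma subword_combZ s a c x :
  0 <= a -> subword_comb s c x -> subword_comb s (a * c) (a *: x).
Proof.
move=> a_ge0 [l [H S E]]; exists [seq (a * p.1, p.2) | p <- l]; split.
- by move=> _ /mapP [p /H [p_ge0 ps] ->]; split => //; exact: mulr_ge0.
- by rewrite big_map -S mulr_sumr.
- by rewrite big_map E scaler_sumr; apply: eq_bigr => p _; rewrite scalerA.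
Qed.

Lemma subword_comb_convex s m (lam : 'I_m -> R) (X : 'I_m -> 'rV[R]_n) :
  (forall j, 0 <= lam j) -> (forall j, subword_comb s 1 (X j)) ->
  subword_comb s (\sum_j lam j) (\sum_j lam j *: X j).
Proof.
move=> lam_ge0 HX; apply: (big_rec2 (subword_comb s)); first exact: subword_comb0.
move=> j c x _ Hx; apply: subword_combD => //.
by have := subword_combZ (lam_ge0 j) (HX j); rewrite mulr1.
Qed.

Lemma subword_comb_subseq s s' c x :
  subseq s s' -> subword_comb s c x -> subword_comb s' c x.
Proof.
move=> ss' [l [H S E]]; exists l; split => // p /H [p_ge0 ps].
by split => //; exact: subseq_trans ps ss'.
Qed.

Lemma refl_mulmx i z : refl alpha alphav i z = z *m rmx alpha alphav i.
Proof.
rewrite /refl /rmx mulmxBr mulmx1 mulmxA /evalroot.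
by rewrite {2}[z *m alpha i]mx11_scalar mul_scalar_mx.
Qed.

Lemma subword_comb_refl s i c x : subword_comb s c x ->
  subword_comb (i :: s) c (x *m intr_mx (rmx alpha alphav i)).
Proof.
move=> [l [H S E]]; exists [seq (p.1, i :: p.2) | p <- l]; split.
- by move=> _ /mapP [p /H [p_ge0 ps] ->] /=; rewrite eqxx.
- by rewrite big_map.
- rewrite big_map E mulmx_suml; apply: eq_bigr => p _.
  by rewrite -scalemxAl /embed -map_mxM /= mulmxA.
Qed.

Lemma Rword_subword_comb s y :
  Rword alpha alphav R s mu y -> subword_comb s 1 (embed R y).
Proof.
elim: s y => [|i s IHs] y /=.
  move=> ->; exists [:: (1, [::])]; split.
  - by move=> p; rewrite inE => /eqP ->.
  - by rewrite big_seq1.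
  - by rewrite big_seq1 /= mulmx1 scale1r.
move=> [[m [pts [lam [Hpts lam_ge0 lam_sum ->]]]] _].
rewrite -lam_sum; apply: subword_comb_convex => // j.
case: (Hpts j) => [/IHs|[z [/IHs Hz ->]]].
  by apply: subword_comb_subseq; exact: subseq_cons.
by rewrite refl_mulmx /embed map_mxM; exact: subword_comb_refl.
Qed.

End SubwordCombinations.

Lemma big_group_seq (I T : eqType) (V : zmodType) (key : I -> T) (F : I -> V)
    (l : seq I) (ws : seq T) :
  uniq ws -> (forall i, i \in l -> key i \in ws) ->
  \sum_(w <- ws) \sum_(i <- l | key i == w) F i = \sum_(i <- l) F i.
Proof.
move=> ws_uniq key_ws; under eq_bigr do rewrite big_mkcond.
rewrite exchange_big /= big_seq [RHS]big_seq; apply: eq_bigr => i il.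
rewrite (bigD1_seq (key i)) ?key_ws //= eqxx big1 ?addr0 // => w.
by rewrite eq_sym => /negbTE ->.
Qed.

Lemma exists_uniq_filter (T : eqType) (P : T -> Prop) (c : seq T) :
  exists ws, uniq ws /\ forall w, w \in ws <-> w \in c /\ P w.
Proof.
exists (undup [seq w <- c | `[< P w >]]); split; first exact: undup_uniq.
move=> w; rewrite mem_undup mem_filter andbC.
by split=> [/andP [-> /asboolP]|[-> /asboolP]].
Qed.

Fixpoint words_upto (k N : nat) : seq (seq 'I_k) :=
  if N is N'.+1 then [::] :: [seq i :: t | i <- enum 'I_k, t <- words_upto k N']
  else [:: [::]].

Lemma mem_words_upto k N (t : seq 'I_k) : (size t <= N)%N -> t \in words_upto k N.
Proof.
elim: N t => [|N IHN] [|i t] //= t_le; rewrite inE; apply/orP; right.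
by apply: (allpairs_f (fun i t => i :: t)); [rewrite mem_enum | exact: IHN].
Qed.

Lemma bruhat_le_words_upto n k (alpha : 'I_k -> 'cV[int]_n)
    (alphav : 'I_k -> 'rV[int]_n) (s : seq 'I_k) w :
  reduced alpha alphav s -> bruhat_le alpha alphav w (mat_word alpha alphav s) ->
  w \in [seq mat_word alpha alphav t | t <- words_upto k (size s)].
Proof.
move=> s_red [s' [t [s'_red s's ts' <-]]]; apply/map_f/mem_words_upto.
by apply: leq_trans (size_subseq ts') (s'_red s _).
Qed.

Theorem mainTheorem7 (R : realFieldType) (n k : nat) (A : 'M[int]_k)
    (alpha : 'I_k -> 'cV[int]_n) (alphav : 'I_k -> 'rV[int]_n) :
  is_GCM A ->
  free_coroots alphav ->
  (forall i j, evalroot alpha j (alphav i) = A i j) ->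
  forall (u : 'M[int]_n) (mu nu : 'rV[int]_n),
    in_Weyl alpha alphav u ->
    Rw alpha alphav R u mu nu ->
    exists (ws : seq 'M[int]_n) (lam : 'M[int]_n -> R),
      [/\ uniq ws,
          (forall w, w \in ws <-> bruhat_le alpha alphav w u),
          (forall w, w \in ws -> 0 <= lam w <= 1),
          \sum_(w <- ws) lam w = 1 &
          embed R nu = \sum_(w <- ws) lam w *: embed R (mu *m w)].
Proof.
move=> _ _ _ u mu nu _ [s [s_red su nu_in]].
set key := fun p : R * seq 'I_k => mat_word alpha alphav p.2.
have [l [l_ok l_sum l_comb]] := Rword_subword_comb nu_in.
have [ws [ws_uniq ws_mem]] := exists_uniq_filter (bruhat_le alpha alphav ^~ u)
  [seq mat_word alpha alphav t | t <- words_upto k (size s)].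
have ws_bruhat w : w \in ws <-> bruhat_le alpha alphav w u.
  rewrite ws_mem -su; split=> [[]|w_le] //.
  by split=> //; exact: bruhat_le_words_upto.
have key_ws p : p \in l -> key p \in ws.
  by move=> /l_ok [_ ps]; apply/ws_bruhat; exists s, p.2.
have weight_ge0 (P : pred (R * seq 'I_k)) : 0 <= \sum_(p <- l | P p) p.1.
  by rewrite big_seq_cond; apply: sumr_ge0 => p /andP [/l_ok []].
exists ws, (fun w => \sum_(p <- l | key p == w) p.1); split => //.
- move=> w _; rewrite weight_ge0 -l_sum [leRHS](bigID (fun p => key p == w)) /=.
  by rewrite lerDl weight_ge0.
- by rewrite big_group_seq.
- rewrite l_comb -(big_group_seq _ ws_uniq key_ws); apply: eq_bigr => w _.
  by rewrite scaler_suml; apply: eq_bigr => p /eqP <-.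
Qed.
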